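(* Let $(S,d)$ be a metric space, let $P$ be a non-empty subset of $S$ with the induced metric, and let $f,g\in\mathrm{BL}(P)$. Then: (i) $\mathcal{E}^{S,0}_P(f)\le\|f\|_\infty\mathbf{1}$; (ii) $\mathcal{E}^{S,0}_P(c\mathbf{1})=c\mathbf{1}$ for every $c\in\mathbb{R}$; (iii) if $f\le g$ and $|f|_L\ge|g|_L$, then $\mathcal{E}^{S,0}_P(f)\le\mathcal{E}^{S,0}_P(g)$; (iv) if $|f\vee g|_L\ge|f|_L$ and $|f\vee g|_L\ge|g|_L$, then $\mathcal{E}^{S,0}_P(f\vee g)\le\mathcal{E}^{S,0}_P(f)\vee\mathcal{E}^{S,0}_P(g)$.
   Context: $\mathrm{BL}(P)$ is the space of bounded real-valued Lipschitz functions on $P$, $|f|_L=\sup_{x\neq y}|f(x)-f(y)|/d(x,y)$ (with $|f|_L=0$ if $P$ is a singleton), $f\vee g$ is the pointwise maximum, and $\mathbf{1}$ is the constant function $1$. For $f\in\mathrm{BL}(P)$, $\mathcal{E}^{S,0}_P f(x)=\sup_{p\in P}[f(p)-|f|_L d(p,x)]$ for $x\in S$. *)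

From HB Require Import structures.
From mathcomp Require Import all_boot all_order all_algebra.
From mathcomp Require Import boolp classical_sets reals.
Set Implicit Arguments. Unset Strict Implicit. Unset Printing Implicit Defensive.
Import Order.TTheory GRing.Theory Num.Theory.
Local Open Scope classical_set_scope.
Local Open Scope ring_scope.

Definition is_metric (R : realType) (S : Type) (d : S -> S -> R) : Prop :=
  [/\ (forall x y, 0 <= d x y),
      (forall x y, d x y = 0 <-> x = y),
      (forall x y, d x y = d y x) &
      (forall x y z, d x z <= d x y + d y z)].

(* f : S -> R is regarded as a function on P (values off P are irrelevant).
   BL(P): bounded and Lipschitz on P. *)
Definition BL (R : realType) (S : Type) (d : S -> S -> R) (P : set S)
  (f : S -> R) : Prop :=
  (exists M : R, forall p, P p -> `|f p| <= M) /\
  (exists L : R, forall p q, P p -> P q -> `|f p - f q| <= L * d p q).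

Definition lipnorm (R : realType) (S : Type) (d : S -> S -> R) (P : set S)
  (f : S -> R) : R :=
  if `[< exists x y, [/\ P x, P y & x <> y] >] then
    sup [set r | exists x y, [/\ P x, P y, x <> y & r = `|f x - f y| / d x y]]
  else 0.

Definition supnorm (R : realType) (S : Type) (P : set S) (f : S -> R) : R :=
  sup [set r | exists p, P p /\ r = `|f p|].

Definition ext0 (R : realType) (S : Type) (d : S -> S -> R) (P : set S)
  (f : S -> R) (x : S) : R :=
  sup [set r | exists p, P p /\ r = f p - lipnorm d P f * d p x].

(* Every term f p - |f|_L d(p,x) of the supremum lies below f p, which gives (i); raising
   the slope to any L >= |g|_L only lowers the terms of g, so a term of g with slope L is
   still below E(g) x.  This yields (iii) directly and (iv) by comparing the term of
   f \/ g at p with the term of whichever of f, g attains the maximum at p. *)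
From HB Require Import structures.
From mathcomp Require Import all_boot all_order all_algebra.
From mathcomp Require Import boolp classical_sets reals.
Import Order.TTheory GRing.Theory Num.Theory.
Local Open Scope classical_set_scope.
Local Open Scope ring_scope.

Section McShaneExtension.
Variables (R : realType) (S : Type) (d : S -> S -> R) (P : set S).
Hypothesis d_ge0 : forall x y, 0 <= d x y.

Lemma lipnorm_ge0 (f : S -> R) : 0 <= lipnorm d P f.
Proof.
rewrite /lipnorm; case: asboolP => // -[x [y [Px Py xy]]].
set E := [set r | _].
have Exy : E (`|f x - f y| / d x y) by exists x, y.
have [supE|nsupE] := pselect (has_sup E); last by rewrite sup_out.
by apply: le_trans (sup_upper_bound supE Exy); rewrite divr_ge0.
Qed.

Lemma lipnorm_cst (c : R) : lipnorm d P (fun=> c) = 0.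
Proof.
rewrite /lipnorm; case: asboolP => // -[x [y [Px Py xy]]].
rewrite -[RHS](sup1 0); congr sup; apply/seteqP; split => r /=.
  by case=> [a [b [_ _ _ ->]]]; rewrite subrr normr0 mul0r.
by move=> ->; exists x, y; rewrite subrr normr0 mul0r.
Qed.

Lemma ge_ext0 (f : S -> R) (x : S) (y : R) : P !=set0 ->
  (forall p, P p -> f p - lipnorm d P f * d p x <= y) -> ext0 d P f x <= y.
Proof.
move=> [p0 Pp0] fy; apply: ge_sup; first by exists (f p0 - lipnorm d P f * d p0 x), p0.
by move=> _ [p [Pp ->]]; exact: fy.
Qed.

Lemma slope_term_le_ext0 {g : S -> R} (x : S) {p : S} {L : R} :
  (exists M, forall q, P q -> g q <= M) -> lipnorm d P g <= L -> P p ->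
  g p - L * d p x <= ext0 d P g x.
Proof.
move=> [M gM] gL Pp.
have term_le q : P q -> g q - lipnorm d P g * d q x <= M.
  move=> Pq; apply: le_trans (gM q Pq).
  by rewrite lerBlDr lerDl mulr_ge0 // lipnorm_ge0.
apply: (@le_trans _ _ (g p - lipnorm d P g * d p x)).
  by rewrite lerB // ler_wpM2r.
apply: ub_le_sup; last by exists p.
by exists M => _ [q [Pq ->]]; exact: term_le.
Qed.

Lemma BL_ubound (f : S -> R) : BL d P f -> exists M, forall p, P p -> f p <= M.
Proof. by case=> -[M fM] _; exists M => p Pp; exact: le_trans (ler_norm _) (fM p Pp). Qed.

Lemma ext0_le_supnorm (f : S -> R) (x : S) : P !=set0 -> BL d P f ->
  ext0 d P f x <= supnorm P f.
Proof.
move=> P0 [[M fM] _]; apply: ge_ext0 => // p Pp.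
have fp_le : `|f p| <= supnorm P f.
  apply: ub_le_sup; last by exists p.
  by exists M => _ [q [Pq ->]]; exact: fM.
rewrite lerBlDr (le_trans (ler_norm _)) // (le_trans fp_le) //.
by rewrite lerDl mulr_ge0 // lipnorm_ge0.
Qed.

Lemma ext0_cst (c : R) (x : S) : P !=set0 -> ext0 d P (fun=> c) x = c.
Proof.
move=> [p0 Pp0]; rewrite /ext0 lipnorm_cst -[RHS](sup1 c); congr sup.
apply/seteqP; split => r /=; first by case=> p [_ ->]; rewrite mul0r subr0.
by move=> ->; exists p0; rewrite mul0r subr0.
Qed.

Lemma le_ext0 (f g : S -> R) (x : S) : P !=set0 -> BL d P g ->
  (forall p, P p -> f p <= g p) -> lipnorm d P g <= lipnorm d P f ->
  ext0 d P f x <= ext0 d P g x.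
Proof.
move=> P0 /BL_ubound gM fg gf; apply: ge_ext0 => // p Pp.
by apply: le_trans (slope_term_le_ext0 x gM gf Pp); rewrite lerB ?fg.
Qed.

Lemma ext0_max_le (f g : S -> R) (x : S) : P !=set0 -> BL d P f -> BL d P g ->
  let h p := Num.max (f p) (g p) in
  lipnorm d P f <= lipnorm d P h -> lipnorm d P g <= lipnorm d P h ->
  ext0 d P h x <= Num.max (ext0 d P f x) (ext0 d P g x).
Proof.
move=> P0 /BL_ubound fM /BL_ubound gM h fh gh; apply: ge_ext0 => // p Pp.
have fp := slope_term_le_ext0 x fM fh Pp; have gp := slope_term_le_ext0 x gM gh Pp.
rewrite /h lerBlDr ge_max -!lerBlDr.
by rewrite !le_max fp gp orbT.
Qed.

End McShaneExtension.

Theorem proposition4p3 (R : realType) (S : Type) (d : S -> S -> R) (P : set S)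
  (hd : is_metric d) (hP : P !=set0) :
  (forall f : S -> R, BL d P f ->
     forall x : S, ext0 d P f x <= supnorm P f) /\
  (forall c : R, forall x : S, ext0 d P (fun _ => c) x = c) /\
  (forall f g : S -> R, BL d P f -> BL d P g ->
     (forall p, P p -> f p <= g p) -> lipnorm d P g <= lipnorm d P f ->
     forall x : S, ext0 d P f x <= ext0 d P g x) /\
  (forall f g : S -> R, BL d P f -> BL d P g ->
     lipnorm d P f <= lipnorm d P (fun p => Num.max (f p) (g p)) ->
     lipnorm d P g <= lipnorm d P (fun p => Num.max (f p) (g p)) ->
     forall x : S, ext0 d P (fun p => Num.max (f p) (g p)) x
                   <= Num.max (ext0 d P f x) (ext0 d P g x)).
Proof.
have d_ge0 : forall x y, 0 <= d x y by case: hd.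
split; first by move=> f fBL x; exact: ext0_le_supnorm.
split; first by move=> c x; exact: ext0_cst.
split; first by move=> f g _ gBL fg gf x; exact: le_ext0.
by move=> f g fBL gBL fh gh x; exact: ext0_max_le.
Qed.
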